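(* Let $C$ be an $(n,\alpha,v,\rho)$-FR code, let $k\in\{1,\dots,n\}$ and let $M\in\{1,\dots,v\}$ be an integer with $M\le M_k(C)$ (i.e. a file of size $M$ can be stored using $C$ with reconstruction degree $k$). Then $$k\ \ge\ \left\lceil \frac{n\binom{M-1}{\alpha}}{\binom{v}{\alpha}}\right\rceil+1 .$$
   Context: An incidence structure is a triple $(\mathcal P,\mathcal B,\mathcal I)$ with $\mathcal P$ (points) and $\mathcal B$ (blocks) finite sets and $\mathcal I\subseteq \mathcal P\times\mathcal B$; repeated blocks are allowed. An $(n,\alpha,v,\rho)$-FR code is an incidence structure with $|\mathcal B|=n$, $|\mathcal P|=v$, every point incident with exactly $\rho$ blocks and every block incident with exactly $\alpha$ points. The supported file size is $M_k(C)=\min_{\mathcal K\subseteq\mathcal B,|\mathcal K|=k}|\{p\in\mathcal P:\exists B\in\mathcal K,(p,B)\in\mathcal I\}|$. Binomial coefficients $\binom{a}{b}$ are $0$ when $a<b$. *)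

From mathcomp Require Import all_boot.
Set Implicit Arguments. Unset Strict Implicit. Unset Printing Implicit Defensive.

(* An incidence structure with point set 'I_v and block set 'I_n (blocks are
   indexed, so repeated blocks are allowed); I p B means (p,B) is an incidence. *)
Definition is_FR_code (n alpha v rho : nat) (I : 'I_v -> 'I_n -> bool) : Prop :=
  (forall p : 'I_v, #|[set B : 'I_n | I p B]| = rho) /\
  (forall B : 'I_n, #|[set p : 'I_v | I p B]| = alpha).

Definition covered {n v : nat} (I : 'I_v -> 'I_n -> bool) (K : {set 'I_n}) : nat :=
  #|[set p : 'I_v | [exists B in K, I p B]]|.

(* supported file size M_k(C): minimum over k-subsets of blocks of the number of
   covered points (the neutral element v is an upper bound of every term). *)
Definition Mk {n v : nat} (I : 'I_v -> 'I_n -> bool) (k : nat) : nat :=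
  \big[minn/v]_(K : {set 'I_n} | #|K| == k) covered I K.

Definition ceil_div (a b : nat) : nat := (a + b.-1) %/ b.

From mathcomp Require Import all_boot order.
From mathcomp Require Import ring zify.

Set Implicit Arguments.
Unset Strict Implicit.
Unset Printing Implicit Defensive.

Import Order.Theory.

(* Average over the m-subsets S of points the number t(S) of blocks lying
   inside S: counting pairs (block, S) gives n * 'C(v - alpha, m - alpha) and
   hence average n * 'C(m, alpha) / 'C(v, alpha), so some S with m = M - 1 has
   at least that many blocks inside it.  Were there k of them, those k blocks
   would cover at most M - 1 points, contradicting M <= M_k(C). *)

Lemma card_supersets (T : finType) (A : {set T}) m : #|A| <= m ->
  #|[set S : {set T} | A \subset S & #|S| == m]| = 'C(#|T| - #|A|, m - #|A|).
Proof.
move=> leAm; rewrite -(cardsC A) addKn -cards_draws.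
set D := [set S : {set T} | A \subset S & #|S| == m].
have AUSDA (S : {set T}) : A \subset S -> A :|: S :\: A = S.
  by move=> sAS; rewrite -{2}(setID S A) (setIidPr sAS).
have injD : {in D &, injective (fun S => S :\: A)}.
  move=> S1 S2; rewrite !inE => /andP[sAS1 _] /andP[sAS2 _] eqS.
  by rewrite -(AUSDA _ sAS1) -(AUSDA _ sAS2) eqS.
rewrite -(card_in_imset injD); apply: eq_card => B; rewrite inE.
apply/imsetP/andP => [[S] | [sBCA /eqP cardB]].
  rewrite inE => /andP[sAS /eqP cardS] ->.
  by rewrite subsetDr cardsD (setIidPr sAS) cardS.
have disjAB : A :&: B = set0.
  by apply/disjoint_setI0; rewrite disjoint_sym disjoints_subset.
exists (A :|: B).
  rewrite /D inE subsetUl cardsU disjAB cards0 subn0 cardB.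
  by apply/eqP; exact: subnKC.
by rewrite setDUl setDv set0U; apply/esym/setDidPl; rewrite disjoints_subset.
Qed.

Lemma mul_bin_sub v m a : a <= m -> m <= v ->
  'C(v, a) * 'C(v - a, m - a) = 'C(v, m) * 'C(m, a).
Proof.
move=> leam lemv; have leav := leq_trans leam lemv.
have facts_gt0 : 0 < a`! * (m - a)`! * (v - m)`! by rewrite !muln_gt0 !fact_gt0.
apply/eqP; rewrite -(eqn_pmul2r facts_gt0); apply/eqP.
have binVa : 'C(v - a, m - a) * ((m - a)`! * (v - m)`!) = (v - a)`!.
  by rewrite -(bin_fact (leq_sub2r a lemv)) subnBA // subnK.
have lhsE : 'C(v, a) * 'C(v - a, m - a) * (a`! * (m - a)`! * (v - m)`!)
    = 'C(v, a) * (a`! * (v - a)`!) by rewrite -binVa; ring.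
have rhsE : 'C(v, m) * 'C(m, a) * (a`! * (m - a)`! * (v - m)`!)
    = 'C(v, m) * ('C(m, a) * (a`! * (m - a)`!) * (v - m)`!) by ring.
by rewrite lhsE rhsE !bin_fact.
Qed.

Lemma exists_ge_average (T : finType) (D : {pred T}) (f : T -> nat) N :
  0 < #|D| -> N * #|D| <= \sum_(x in D) f x -> exists2 x, x \in D & N <= f x.
Proof.
move=> D_gt0 le_sum.
have [/exists_inP[x Dx le_Nf] | /exists_inPn lt_fN] :=
  boolP [exists x in D, N <= f x]; first by exists x.
have : \sum_(x in D) (f x + 1) <= \sum_(x in D) N.
  by apply: leq_sum => x Dx; rewrite addn1 ltnNge lt_fN.
rewrite big_split /= sum1_card sum_nat_const; lia.
Qed.

Section UniformFamily.

Variables (T I : finType) (blk : I -> {set T}) (a : nat).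
Hypothesis card_blk : forall i, #|blk i| = a.

Definition blocks_within (S : {set T}) : {set I} := [set i | blk i \subset S].

Lemma sum_card_blocks_within m : a <= m ->
  \sum_(S : {set T} | #|S| == m) #|blocks_within S| = #|I| * 'C(#|T| - a, m - a).
Proof.
move=> leam.
under eq_bigr do rewrite -sum1dep_card.
rewrite (exchange_big_dep predT) //=.
rewrite -sum1_card big_distrl /=; apply: eq_bigr => i _.
rewrite sum1dep_card -(card_blk i) -card_supersets ?card_blk // mul1n.
by apply: eq_card => S; rewrite !inE andbC.
Qed.

Lemma exists_many_blocks_within m : m <= #|T| ->
  exists2 S : {set T}, #|S| = m &
    #|I| * 'C(m, a) <= #|blocks_within S| * 'C(#|T|, a).
Proof.
move=> lemT; pose D := [set S : {set T} | #|S| == m].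
have D_gt0 : 0 < #|D| by rewrite card_draws bin_gt0.
have [ltma | leam] := ltnP m a.
  case/card_gt0P: D_gt0 => S; rewrite inE => /eqP cardS.
  by exists S; rewrite // bin_small // muln0.
have sumD : \sum_(S in D) #|blocks_within S| * 'C(#|T|, a) = #|I| * 'C(m, a) * #|D|.
  rewrite -big_distrl /= (eq_bigl _ _ (in_set _)) sum_card_blocks_within //.
  by rewrite card_draws -!mulnA; congr (_ * _); rewrite mulnC mul_bin_sub // mulnC.
have [S] := exists_ge_average D_gt0 (eq_leq (esym sumD)).
by rewrite inE => /eqP cardS; exists S.
Qed.

End UniformFamily.

Lemma ceil_div_le a b t : a <= t * b -> ceil_div a b <= t.
Proof.
rewrite /ceil_div; case: b => [|b] le_atb; first by rewrite divn0.
by rewrite -ltnS ltn_divLR //=; lia.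
Qed.

Section FRCode.

Variables (n v : nat) (I : 'I_v -> 'I_n -> bool).

Definition block (B : 'I_n) : {set 'I_v} := [set p | I p B].

(* [minn] is [Order.min] on [nat], so the big-min lemmas of [order] apply. *)
Lemma Mk_le_covered (K : {set 'I_n}) : Mk I #|K| <= covered I K.
Proof. exact: (bigmin_le_cond _ (covered I)). Qed.

Lemma covered_le_card (K : {set 'I_n}) (S : {set 'I_v}) :
  K \subset blocks_within block S -> covered I K <= #|S|.
Proof.
move=> sKS; apply/subset_leq_card/subsetP => p; rewrite inE.
case/exists_inP => B BK IpB; have := subsetP sKS B BK.
by rewrite inE => /subsetP; apply; rewrite inE.
Qed.

Lemma Mk_le_card k (S : {set 'I_v}) :
  k <= #|blocks_within block S| -> Mk I k <= #|S|.
Proof.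
rewrite -bin_gt0 -cards_draws => /card_gt0P[K]; rewrite inE => /andP[sKS /eqP <-].
exact: leq_trans (Mk_le_covered K) (covered_le_card sKS).
Qed.

End FRCode.

Theorem theorem2 (n alpha v rho : nat) (I : 'I_v -> 'I_n -> bool)
    (hC : @is_FR_code n alpha v rho I) (k M : nat)
    (hk1 : 1 <= k) (hkn : k <= n) (hM1 : 1 <= M) (hMv : M <= v)
    (hMk : M <= Mk I k) :
  ceil_div (n * 'C(M.-1, alpha)) 'C(v, alpha) + 1 <= k.
Proof.
have [_ card_block] := hC.
have leMv : M.-1 <= #|'I_v| by rewrite card_ord; lia.
have [S cardS rich] := exists_many_blocks_within (blk := block I) card_block leMv.
have few : #|blocks_within (block I) S| < k.
  by rewrite ltnNge; apply/negP => /Mk_le_card; rewrite cardS; lia.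
rewrite addn1 (leq_trans _ few) // ltnS ceil_div_le //.
by rewrite !card_ord in rich.
Qed.
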